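(* Let $K$ be a compact line and let $G:K\to\mathbb{R}$ be an amenable function. Then $\lim_{y\searrow 0_K}L_G(y)=G(0_K)$.
   Context: A compact line is a compact space $K$ whose topology is the order topology of a linear order on $K$; $0_K$ and $1_K$ denote its minimum and maximum, and $0_K<1_K$. A point $x\in(0_K,1_K]$ is left-isolated if it has an immediate predecessor $x^-$ and left-dense otherwise; $x\in[0_K,1_K)$ is right-dense if it has no immediate successor. $G$ is regulated if for every left-dense $x$ the limit $\lim_{y\nearrow x}G(y)$ exists and for every right-dense $x$, $\lim_{y\searrow x}G(y)=G(x)$; $G$ is amenable if it is regulated and right-continuous. For regulated $G$, $L_G(0_K)=0$, $L_G(x)=\lim_{y\nearrow x}G(y)$ if $x\in(0_K,1_K]$ is left-dense, and $L_G(x)=G(x^-)$ if $x$ is left-isolated. The limit $y\searrow 0_K$ is along $y>0_K$ decreasing to $0_K$. *)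

From HB Require Import structures.
From mathcomp Require Import all_boot all_order all_algebra.
From mathcomp Require Import all_classical all_reals all_analysis.
Set Implicit Arguments. Unset Strict Implicit. Unset Printing Implicit Defensive.
Import Order.TTheory GRing.Theory Num.Theory.
Import numFieldNormedType.Exports.
Local Open Scope classical_set_scope.
Local Open Scope order_scope.

Section CompactLine.
Context {d : Order.disp_t} {K : orderTopologicalType d} {R : realType}.

Definition is_pred (p x : K) : Prop := p < x /\ forall y : K, ~ (p < y /\ y < x).
Definition is_succ (s x : K) : Prop := x < s /\ forall y : K, ~ (x < y /\ y < s).

(* a = 0_K, b = 1_K *)
Definition left_isolated (a : K) (x : K) : Prop := a < x /\ exists p, is_pred p x.
Definition left_dense (a : K) (x : K) : Prop := a < x /\ ~ (exists p, is_pred p x).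
Definition right_dense (b : K) (x : K) : Prop := x < b /\ ~ (exists s, is_succ s x).

Definition left_filter (x : K) := within [set y | y < x] (nbhs x).
Definition right_filter (x : K) := within [set y | x < y] (nbhs x).

Definition regulated (a b : K) (G : K -> R) : Prop :=
  (forall x, left_dense a x -> cvg (G @ left_filter x)) /\
  (forall x, right_dense b x -> G @ right_filter x --> G x).

Definition right_continuous (b : K) (G : K -> R) : Prop :=
  forall x, x < b -> G @ right_filter x --> G x.

Definition amenable (a b : K) (G : K -> R) : Prop :=
  regulated a b G /\ right_continuous b G.

Definition LG (a : K) (G : K -> R) (x : K) : R :=
  if x == a then 0%R
  else if pselect (exists p, is_pred p x) is left _ then G (xget a [set p | is_pred p x])
  else lim (G @ left_filter x).

End CompactLine.

From HB Require Import structures.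
From mathcomp Require Import all_boot all_order all_algebra.
From mathcomp Require Import all_classical all_reals all_analysis.
Import Order.TTheory GRing.Theory Num.Theory.
Import numFieldNormedType.Exports.

Set Implicit Arguments.
Unset Strict Implicit.
Unset Printing Implicit Defensive.
Local Open Scope classical_set_scope.
Local Open Scope order_scope.

(* Right continuity at 0_K makes G close to G(0_K) on a segment [0_K, y].
   For 0_K < x <= y, L_G(x) is either a value of G on [0_K, x[ or, when x is
   left-dense (hence adherent to ]-oo, x[), a limit of such values; either
   way it lies in every closed set containing G([0_K, x[), in particular in
   the closed ball of radius e around G(0_K). *)

Section OrderTopology.
Context {d : Order.disp_t} {K : orderTopologicalType d}.

Lemma mem_itv_between (i : interval K) (x y z : K) :
  x \in i -> y \in i -> x <= z -> z <= y -> z \in i.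
Proof.
case: i => l u; rewrite !itv_boundlr => /andP[lx _] /andP[_ yu] xz zy.
by rewrite (le_trans lx) ?(le_trans _ yu) ?bnd_simp.
Qed.

Lemma nbhs_right_segment (x : K) (U : set K) :
  nbhs x U -> \forall y \near x, forall z, x <= z -> z <= y -> U z.
Proof.
rewrite itv_nbhsE => -[i [oi xi] iU]; rewrite /prop_near1 itv_nbhsE.
by exists i => // y yi z xz zy; apply: iU; exact: mem_itv_between xi yi xz zy.
Qed.

Lemma no_pred_dense (x l : K) :
  ~ (exists p, is_pred p x) -> l < x -> exists2 z, l < z & z < x.
Proof.
move=> no_pred lx; apply: contrapT => no_between; apply: no_pred.
by exists l; split => // y [ly yx]; apply: no_between; exists y.
Qed.

Lemma left_dense_closure (a x : K) :
  left_dense a x -> closure [set y | y < x] x.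
Proof.
move=> [ax no_pred] B; rewrite itv_nbhsE.
move=> -[[l u] [oi]]; rewrite itv_boundlr => /andP[lx xu] iB.
have [z lz zx] : exists2 z, l <= BLeft z & z < x.
  case: l oi lx {iB} => [b l|b] oi lx.
  - move: lx; rewrite (itv_open_ends_lside oi) bnd_simp => lx.
    by have [z lz zx] := no_pred_dense no_pred lx; exists z; rewrite ?bnd_simp.
  - by rewrite (itv_open_ends_linfty oi); exists a.
exists z; split => //; apply: iB.
by rewrite /= itv_boundlr lz (le_trans _ xu) // bnd_simp ltW.
Qed.

Lemma left_filter_proper (a x : K) :
  left_dense a x -> ProperFilter (left_filter x).
Proof. by move=> /left_dense_closure; exact: within_nbhs_proper. Qed.

End OrderTopology.

Section LeftValues.
Context {d : Order.disp_t} {K : orderTopologicalType d} {R : realType}.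
Variables (a b : K) (G : K -> R).

Lemma closed_LG (C : set R) (x : K) : closed C -> regulated a b G -> a < x ->
  (forall z, z < x -> C (G z)) -> C (LG a G x).
Proof.
move=> clC [Gcvg _] ax CG; rewrite /LG gt_eqF //.
case: pselect => [ex_pred|no_pred].
  by have [/CG] := xgetPex a ex_pred.
have x_dense : left_dense a x by [].
apply: (closed_cvg (FF := left_filter_proper x_dense) _ clC _ _ (Gcvg x x_dense)).
by rewrite /left_filter near_withinE; apply: nearW => z /CG.
Qed.

End LeftValues.

Theorem lemma5p3 (d : Order.disp_t) (K : orderTopologicalType d) (R : realType)
  (a b : K) (hcompact : compact [set: K])
  (hmin : forall x : K, a <= x) (hmax : forall x : K, x <= b) (hab : a < b)
  (G : K -> R) (hG : amenable a b G) :
  LG a G @ right_filter a --> G a.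
Proof.
have [Greg Grc] := hG.
apply/cvgrPdist_le => e e0.
have G_right_near : \forall y \near a, a < y -> (`|G a - G y| <= e)%R.
  by move/cvgrPdist_le: (Grc a hab) => /(_ e e0); rewrite near_withinE.
have G_segment_near := nbhs_right_segment G_right_near.
rewrite near_withinE; near=> y => ay.
have G_segment z : a <= z -> z <= y -> a < z -> (`|G a - G z| <= e)%R.
  by move: z; near: y.
apply: (closed_LG (closed_closed_ball_ (x := G a) (e := e)) Greg ay) => z zy.
have [<-|az] := eqVneq a z; first by rewrite /closed_ball_ /= subrr normr0 ltW.
by apply: G_segment; rewrite ?ltW // lt_neqAle az hmin.
Unshelve. all: by end_near.
Qed.
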